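(* Let $\{\mathbb{G}_n,\ n=2,3,\ldots\}$ be a sequence of random graphs as described in the context, with $\lim_{n\to\infty}|V_n|=\infty$, satisfying: (A) for each $n$, $D_{n,k}$ has the same distribution as $D_{n,1}$ for all $k\in V_n$, and for all distinct $k,\ell\in V_n$, $(D_{n,k},D_{n,\ell})$ has the same joint distribution as $(D_{n,1},D_{n,2})$; (B) there is an $\mathbb{N}$-valued random variable $D$ with pmf $p=(p(d),\ d=0,1,\ldots)$ such that $D_{n,1}\to D$ in distribution; (C) for each $d=0,1,\ldots$, $\lim_{n\to\infty}\mathrm{Cov}\big[\mathbf{1}[D_{n,1}=d],\mathbf{1}[D_{n,2}=d]\big]=0$. Then $d_{\mathrm{TV}}(P_n,p)\to 0$ in probability as $n\to\infty$.
   Context: All random variables are defined on a common probability space $(\Omega,\mathcal{F},\mathbb{P})$. For each $n=2,3,\ldots$, $\mathbb{G}_n$ is a random (possibly directed, self-loops allowed) graph on the deterministic finite node set $V_n=\{1,\ldots,k_n\}$ with $k_n\ge 2$, determined by $\{0,1\}$-valued edge random variables $\{\chi_n(k,\ell),\ k,\ell\in V_n\}$. The degree of node $k$ is $D_{n,k}=\sum_{\ell\in V_n}\chi_n(k,\ell)$. For $d=0,1,\ldots$, $P_n(d)=\frac{1}{|V_n|}\sum_{k\in V_n}\mathbf{1}[D_{n,k}=d]$, and $P_n=(P_n(d),\ d=0,1,\ldots)$ is the (random) empirical degree pmf on $\mathbb{N}=\{0,1,\ldots\}$. For pmfs $\mu,\nu$ on $\mathbb{N}$, $d_{\mathrm{TV}}(\mu,\nu)=\frac12\sum_{x=0}^\infty|\mu(x)-\nu(x)|$.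 *)

From HB Require Import structures.
From mathcomp Require Import all_boot all_order all_algebra.
From mathcomp Require Import all_classical all_reals all_analysis.
Set Implicit Arguments. Unset Strict Implicit. Unset Printing Implicit Defensive.
Import Order.TTheory GRing.Theory Num.Theory.
Import numFieldNormedType.Exports.
Local Open Scope classical_set_scope.
Local Open Scope ring_scope.

Section defs.
Context {dT : measure_display} {T : measurableType dT} {R : realType}.
Variable P : probability T R.

(* Degree of node i (nodes are 0, ..., kn - 1) of a random graph with
   edge indicators chi : nat -> nat -> T -> bool and kn nodes. *)
Definition degree (kn : nat) (chi : nat -> nat -> T -> bool) (i : nat) (w : T) : nat :=
  \sum_(l < kn) (chi i l w : nat).

Definition emp_degree_pmf (kn : nat) (chi : nat -> nat -> T -> bool) (w : T) (d : nat) : R :=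
  (kn%:R)^-1 * (#|[set i : 'I_kn | degree kn chi i w == d]|)%:R.

Definition dTV (mu nu : nat -> R) : \bar R :=
  ((2%:R)^-1)%:E * (\sum_(0 <= x <oo) (`|mu x - nu x|)%:E)%E.

Definition same_distr (X Y : T -> nat) : Prop :=
  forall A : set nat, P (X @^-1` A) = P (Y @^-1` A).

Definition same_joint_distr (X1 X2 Y1 Y2 : T -> nat) : Prop :=
  forall A : set (nat * nat),
    P ((fun w => (X1 w, X2 w)) @^-1` A) = P ((fun w => (Y1 w, Y2 w)) @^-1` A).

Definition nat_cdf (X : T -> nat) (x : R) : R := fine (P [set w | (X w)%:R <= x]).

Definition conv_in_distr (X : nat -> T -> nat) (Y : T -> nat) : Prop :=
  forall x : R, {for x, continuous (nat_cdf Y)} ->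
    (fun n => nat_cdf (X n) x) @ \oo --> nat_cdf Y x.

Definition nat_pmf (X : T -> nat) (d : nat) : R := fine (P [set w | X w = d]).

End defs.

(* Write a_n(d) = P(D_{n,1} = d) and c_n(d) for the covariance in (C).  By (A), P_n(d) is
   the average of k_n indicators of mean a_n(d) whose pairwise covariances all equal c_n(d),
   so Var P_n(d) <= 1/k_n + c_n(d) -> 0; as a_n(d) -> p(d) by (B), Chebyshev's inequality
   gives P_n(d) -> p(d) in probability for every d.  To pass to total variation, choose M
   with p{0,...,M-1} > 1 - eps/2: then d_TV(P_n, p) <= sum_{d<M} |P_n(d) - p(d)| + eps/2, so
   d_TV(P_n, p) > eps forces |P_n(d) - p(d)| >= eps/(2(M+1)) for some d < M, and a union
   bound over these M events concludes.  All the probabilities involved are those of events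
   determined by the finitely-valued edge matrix (chi_n(k,l))_{k,l < k_n}, hence are finite
   sums of the weights of its law. *)

From HB Require Import structures.
From mathcomp Require Import all_boot all_order all_algebra.
From mathcomp Require Import all_classical all_reals all_analysis.
From mathcomp Require Import ring lra.
Set Implicit Arguments. Unset Strict Implicit. Unset Printing Implicit Defensive.
Import Order.TTheory GRing.Theory Num.Theory.
Import numFieldNormedType.Exports.
Local Open Scope classical_set_scope.
Local Open Scope ring_scope.

Lemma card_set_sum (I : finType) (P : pred I) : #|[set i | P i]| = (\sum_i P i)%N.
Proof.
rewrite -sum1_card big_mkcond; apply: eq_bigr => i _.
by case: (boolP (P i)) => Pi; [rewrite mem_set | rewrite memNset //; apply/negP].
Qed.

Section finite_weighted_sums.
Context {R : realFieldType} {F : finType} (m : F -> R).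
Hypothesis m_ge0 : forall v, 0 <= m v.

Lemma ler_sum_subpred (S S' : pred F) : (forall v, S v -> S' v) ->
  \sum_(v | S v) m v <= \sum_(v | S' v) m v.
Proof.
move=> SS'; rewrite [leLHS]big_mkcond [leRHS]big_mkcond; apply: ler_sum => v _.
by case: ifP => [/SS' ->|_]; last case: ifP.
Qed.

Lemma sum_exists_le_sum (M : nat) (B : 'I_M -> pred F) :
  \sum_(v | [exists x, B x v]) m v <= \sum_(x < M) \sum_(v | B x v) m v.
Proof.
rewrite [leRHS](exchange_big_dep xpredT) //= big_mkcond /=; apply: ler_sum => v _.
case: existsP => [[x Bx]|_]; last exact: sumr_ge0.
by rewrite (bigD1 x) //= lerDl sumr_ge0.
Qed.

Lemma chebyshev_sum (f : F -> R) (d : R) : 0 < d ->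
  \sum_(v | d <= `|f v|) m v <= d^-2 * \sum_v f v ^+ 2 * m v.
Proof.
move=> d_gt0; rewrite big_mkcond mulr_sumr; apply: ler_sum => v _.
have d2_gt0 : 0 < d ^+ 2 by rewrite exprn_gt0.
case: ifP => [d_le|_]; last first.
  by apply: mulr_ge0; [rewrite invr_ge0 ltW | rewrite mulr_ge0 ?sqr_ge0].
rewrite mulrA -[leLHS]mul1r ler_wpM2r // ler_pdivlMl // mulr1.
by rewrite -(real_normK (num_real (f v))) ler_sqr ?nnegrE // ltW.
Qed.

Section frac_count.
Variables (K : nat) (A : 'I_K -> pred F) (q r : R).
Hypothesis m_sum1 : \sum_v m v = 1.
Hypothesis A_prob : forall i, \sum_(v | A i v) m v = q.
Hypothesis A_pair_prob : forall i j, i != j -> \sum_(v | A i v && A j v) m v = r.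

Lemma sum_sq_dev_frac_count : (0 < K)%N ->
  \sum_v (K%:R^-1 * (#|[set i | A i v]|)%:R - q) ^+ 2 * m v =
  K%:R^-1 * q + (1 - K%:R^-1) * r - q ^+ 2.
Proof.
move=> K_gt0; set N := fun v => (#|[set i | A i v]|)%:R : R.
have N_sum v : N v = \sum_i (A i v)%:R by rewrite /N card_set_sum natr_sum.
have sum_ind (B : pred F) : \sum_v (B v)%:R * m v = \sum_(v | B v) m v.
  by rewrite [RHS]big_mkcond; apply: eq_bigr => v _; case: (B v); rewrite ?mul1r ?mul0r.
have N1 : \sum_v N v * m v = K%:R * q.
  transitivity (\sum_(i < K) q); last by rewrite sumr_const card_ord mulr_natl.
  under eq_bigr do rewrite N_sum mulr_suml.
  by rewrite exchange_big; apply: eq_bigr => i _; rewrite sum_ind A_prob.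
have N2 : \sum_v N v ^+ 2 * m v = K%:R * q + K%:R * (K%:R - 1) * r.
  transitivity (\sum_v \sum_i \sum_j (A i v && A j v)%:R * m v).
    apply: eq_bigr => v _.
    rewrite N_sum expr2 mulr_suml mulr_suml; apply: eq_bigr => i _.
    rewrite mulr_sumr mulr_suml; apply: eq_bigr => j _.
    by case: (A i v); case: (A j v); rewrite /= ?mul1r ?mul0r.
  rewrite exchange_big; under eq_bigr do rewrite exchange_big.
  transitivity (\sum_(i < K) (q + (K%:R - 1) * r)); last first.
    by rewrite sumr_const card_ord -mulr_natl; ring.
  apply: eq_bigr => i _; rewrite (bigD1 i) //= sum_ind.
  rewrite (eq_bigl (A i)) ?A_prob; last by move=> v; rewrite andbb.
  congr (_ + _); transitivity (\sum_(j | j != i) r).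
    by apply: eq_bigr => j ji; rewrite sum_ind A_pair_prob // eq_sym.
  by rewrite sumr_const cardC1 card_ord -subn1 -(mulr_natl r) natrB.
transitivity (\sum_v (K%:R^-1 ^+ 2 * (N v ^+ 2 * m v)
    - 2 * q * K%:R^-1 * (N v * m v) + q ^+ 2 * m v)).
  by apply: eq_bigr => v _; rewrite -/(N v); ring.
rewrite !big_split /= sumrN -!mulr_sumr N1 N2 m_sum1.
have K_neq0 : K%:R != 0 :> R by rewrite pnatr_eq0 -lt0n.
by field.
Qed.

Lemma frac_count_far_le (d : R) : (1 < K)%N -> 0 < d ->
  \sum_(v | d <= `|K%:R^-1 * (#|[set i | A i v]|)%:R - q|) m v <=
  d^-2 * (K%:R^-1 + (r - q ^+ 2)).
Proof.
move=> K_gt1 d_gt0.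
have [i0 [i1 i01]] : exists i j : 'I_K, i != j.
  by exists (Ordinal (ltnW K_gt1)), (Ordinal K_gt1).
have q_le1 : q <= 1.
  by rewrite -(A_prob i0) -m_sum1 (ler_sum_subpred (S' := xpredT)).
have r_ge0 : 0 <= r by rewrite -(A_pair_prob i01) sumr_ge0.
have Kinv_ge0 : 0 <= K%:R^-1 :> R by rewrite invr_ge0.
apply: le_trans (chebyshev_sum _ d_gt0) _.
rewrite sum_sq_dev_frac_count ?(ltnW K_gt1) //.
by apply: ler_wpM2l; [rewrite invr_ge0 exprn_ge0 // ltW | nra].
Qed.

End frac_count.
End finite_weighted_sums.

Section subprobability_pmfs.
Context {R : realType}.

Definition sub_pmf (a : nat -> R) :=
  (forall x, 0 <= a x) /\ (forall N, \sum_(0 <= x < N) a x <= 1).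

Definition emp_pmf (K : nat) (a : 'I_K -> nat) (x : nat) : R :=
  K%:R^-1 * (#|[set i | a i == x]|)%:R.

Lemma sum_nat_eqn (c N : nat) : (\sum_(0 <= x < N) (c == x) = (c < N))%N.
Proof.
elim: N => [|N IH]; first by rewrite big_geq.
by rewrite big_nat_recr //= IH ltnS; case: ltngtP.
Qed.

Lemma emp_pmf_sub_pmf (K : nat) (a : 'I_K -> nat) : (0 < K)%N -> sub_pmf (emp_pmf a).
Proof.
move=> K_gt0; split=> [x|N]; first by rewrite mulr_ge0 ?invr_ge0.
have count_le : (\sum_(0 <= x < N) #|[set i | a i == x]| <= K)%N.
  under eq_bigr do rewrite card_set_sum.
  rewrite exchange_big /= -[leqRHS]card_ord -sum1_card.
  by apply: leq_sum => i _; rewrite sum_nat_eqn leq_b1.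
rewrite -mulr_sumr -natr_sum ler_pdivrMl ?ltr0n // mulr1 ler_nat.
exact: count_le.
Qed.

Lemma dTV_le_head (a b : nat -> R) (M : nat) : sub_pmf a -> sub_pmf b ->
  (dTV a b <= (\sum_(0 <= x < M) `|a x - b x| + (1 - \sum_(0 <= x < M) b x))%:E)%E.
Proof.
move=> [a_ge0 a_le1] [b_ge0 b_le1].
set B := \sum_(0 <= x < M) `|a x - b x| + (1 - \sum_(0 <= x < M) b x).
have partial_le N : \sum_(0 <= x < N) `|a x - b x| <= 2 * B.
  have split_at_M (c : nat -> R) : \sum_(0 <= x < N + M) c x =
      \sum_(0 <= x < M) c x + \sum_(M <= x < N + M) c x.
    by rewrite (big_cat_nat (leq0n M) (leq_addl N M)).
  have tail_le : \sum_(M <= x < N + M) `|a x - b x| <=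
      \sum_(M <= x < N + M) a x + \sum_(M <= x < N + M) b x.
    rewrite -big_split /=; apply: ler_sum => x _.
    by rewrite (le_trans (ler_normB _ _)) // !ger0_norm.
  have head_le : \sum_(0 <= x < M) b x - \sum_(0 <= x < M) a x <=
      \sum_(0 <= x < M) `|a x - b x|.
    by rewrite -sumrB; apply: ler_sum => x _; rewrite distrC ler_norm.
  have sum_ge0 : 0 <= \sum_(N <= x < N + M) `|a x - b x| by apply: sumr_ge0.
  have -> : \sum_(0 <= x < N) `|a x - b x| = \sum_(0 <= x < N + M) `|a x - b x|
      - \sum_(N <= x < N + M) `|a x - b x|.
    by rewrite (big_cat_nat (leq0n N) (leq_addr M N)) /= addrK.
  have := a_le1 (N + M); have := b_le1 (N + M).
  rewrite !split_at_M /B; lra.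
have series_le : (\sum_(0 <= x <oo) (`|a x - b x|)%:E <= (2 * B)%:E)%E.
  apply: lime_le; first by apply: is_cvg_nneseries => n _ _; rewrite lee_fin.
  by apply: nearW => N; rewrite sumEFin lee_fin partial_le.
rewrite /dTV (_ : B = 2^-1 * (2 * B)); last by rewrite mulKf ?pnatr_eq0.
by rewrite EFinM lee_wpmul2l // lee_fin invr_ge0.
Qed.

Lemma dTV_gt_exists_far (a b : nat -> R) (M : nat) (eps : R) :
  sub_pmf a -> sub_pmf b -> 0 < eps -> 1 - \sum_(0 <= x < M) b x < eps / 2 ->
  (eps%:E < dTV a b)%E -> exists2 x, (x < M)%N & eps / (2 * M.+1%:R) <= `|a x - b x|.
Proof.
move=> pa pb eps_gt0 tail_lt dTV_gt; set d := eps / (2 * M.+1%:R).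
case: (pselect (exists2 x, (x < M)%N & d <= `|a x - b x|)) => // no_far.
have near x : (x < M)%N -> `|a x - b x| < d.
  by move=> xM; rewrite ltNge; apply/negP => far; apply: no_far; exists x.
have head_le : \sum_(0 <= x < M) `|a x - b x| <= eps / 2.
  apply: le_trans (_ : \sum_(0 <= x < M) d <= _).
    by apply: ler_sum_nat => x /= xM; exact/ltW/near.
  rewrite sumr_const_nat subn0 -(mulr_natr d) /d mulrAC ler_pdivrMr ?mulr_gt0 ?ltr0n //.
  by rewrite mulrA divfK ?pnatr_eq0 // ler_pM2l // ler_nat.
have := lt_le_trans dTV_gt (dTV_le_head M pa pb); rewrite lte_fin; lra.
Qed.

End subprobability_pmfs.

Definition matrix_degree (K : nat) (v : {ffun 'I_K * 'I_K -> bool}) (i : 'I_K) : nat :=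
  \sum_(l < K) v (i, l).

Section discrete_random_variables.
Context {dT : measure_display} {T : measurableType dT} {R : realType}.
Variable P : probability T R.

Lemma preimage_mem_cons (F : eqType) (W : T -> F) v s :
  [set w | W w \in v :: s] = [set w | W w = v] `|` [set w | W w \in s].
Proof.
apply/seteqP; split => w /=; rewrite inE; first by case/orP => [/eqP|]; [left|right].
by case=> [->|->]; rewrite ?eqxx ?orbT.
Qed.

Lemma measurable_mem_seq (F : eqType) (W : T -> F) :
  (forall v, measurable [set w | W w = v]) ->
  forall s : seq F, measurable [set w | W w \in s].
Proof.
move=> W_fiber; elim=> [|v s IH]; last by rewrite preimage_mem_cons; exact: measurableU.
by rewrite (_ : [set w | _] = set0) //; apply/seteqP; split.
Qed.

Lemma probability_mem_seq (F : eqType) (W : T -> F) :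
  (forall v, measurable [set w | W w = v]) -> forall s : seq F, uniq s ->
  P [set w | W w \in s] = (\sum_(v <- s) fine (P [set w | W w = v]))%:E.
Proof.
move=> W_fiber; elim=> [_|v s IH /andP[vNs s_uniq]].
  by rewrite big_nil (_ : [set w | _] = set0) ?measure0 //; apply/seteqP; split.
rewrite preimage_mem_cons measureU //; first last.
- by apply/seteqP; split => w //= [->]; rewrite (negbTE vNs).
- exact: measurable_mem_seq.
by rewrite big_cons EFinD -IH // fineK ?fin_num_measure.
Qed.

Section finite_law.
Variables (F : finType) (W : T -> F).
Hypothesis W_fiber : forall v, measurable [set w | W w = v].

Let preimage_enum (S : pred F) : [set w | W w \in enum S] = [set w | S (W w)].
Proof. by apply/seteqP; split => w /=; rewrite mem_enum. Qed.

Lemma measurable_fin_preimage (S : pred F) : measurable [set w | S (W w)].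
Proof. by rewrite -preimage_enum; exact: measurable_mem_seq. Qed.

Definition fin_law (v : F) : R := fine (P [set w | W w = v]).

Lemma probability_fin_preimage (S : pred F) :
  P [set w | S (W w)] = (\sum_(v | S v) fin_law v)%:E.
Proof.
by rewrite -preimage_enum probability_mem_seq ?enum_uniq // big_enum_cond /=;
  under eq_bigl do rewrite andbT.
Qed.

Lemma fin_law_ge0 v : 0 <= fin_law v.
Proof. exact/fine_ge0/measure_ge0. Qed.

Lemma fin_law_sum1 : \sum_v fin_law v = 1.
Proof.
have := probability_fin_preimage xpredT.
rewrite (_ : [set w | xpredT (W w)] = setT) ?probability_setT; first by case.
by apply/seteqP; split.
Qed.

End finite_law.

Section edge_matrix.
Variables (K : nat) (c : nat -> nat -> T -> bool).
Hypothesis c_meas : forall i l, measurable [set w | c i l w].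

Definition edge_matrix (w : T) : {ffun 'I_K * 'I_K -> bool} :=
  [ffun e : 'I_K * 'I_K => c e.1 e.2 w].

Lemma edge_matrix_fiber_measurable v : measurable [set w | edge_matrix w = v].
Proof.
have -> : [set w | edge_matrix w = v] =
    \bigcap_(e in [set: 'I_K * 'I_K]) [set w | c e.1 e.2 w = v e].
  apply/seteqP; split => w /=; first by move=> <- e _; rewrite ffunE.
  by move=> ce; apply/ffunP => e; rewrite ffunE; exact: ce.
apply: fin_bigcap_measurable; first exact: finite_finset.
move=> e _; case: (v e); first exact: c_meas.
rewrite (_ : [set w | _ = false] = ~` [set w | c e.1 e.2 w]); first exact/measurableC/c_meas.
by apply/seteqP; split => w /=; case: (c e.1 e.2 w).
Qed.

Lemma degree_edge_matrix (i : 'I_K) w : degree K c i w = matrix_degree (edge_matrix w) i.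
Proof. by apply: eq_bigr => l _; rewrite ffunE. Qed.

Lemma emp_degree_pmf_edge_matrix w :
  emp_degree_pmf K c w = emp_pmf (R := R) (matrix_degree (edge_matrix w)).
Proof.
apply/funext => x; rewrite /emp_degree_pmf /emp_pmf; congr (_ * (#|_|)%:R).
by apply/seteqP; split => i /=; rewrite degree_edge_matrix.
Qed.

Lemma degree_fiber_measurable (i : 'I_K) d : measurable [set w | degree K c i w = d].
Proof.
have -> : [set w | degree K c i w = d] =
    [set w | (fun v => matrix_degree v i == d) (edge_matrix w)].
  by apply/seteqP; split => w /=; rewrite degree_edge_matrix => /eqP.
exact: (measurable_fin_preimage edge_matrix_fiber_measurable
  (fun v => matrix_degree v i == d)).
Qed.

Lemma probability_degree_fiber (i : 'I_K) x :
  fine (P (degree K c i @^-1` [set x])) =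
  \sum_(v | matrix_degree v i == x) fin_law edge_matrix v.
Proof.
have -> : degree K c i @^-1` [set x] =
    [set w | (fun v => matrix_degree v i == x) (edge_matrix w)].
  by apply/seteqP; split => w /=; rewrite degree_edge_matrix => /eqP.
by rewrite (probability_fin_preimage edge_matrix_fiber_measurable
  (fun v => matrix_degree v i == x)).
Qed.

Lemma probability_degree_pair_fiber (i j : 'I_K) x :
  fine (P ((fun w => (degree K c i w, degree K c j w)) @^-1` [set (x, x)])) =
  \sum_(v | (matrix_degree v i == x) && (matrix_degree v j == x)) fin_law edge_matrix v.
Proof.
have -> : (fun w => (degree K c i w, degree K c j w)) @^-1` [set (x, x)] =
    [set w | (fun v => (matrix_degree v i == x) && (matrix_degree v j == x)) (edge_matrix w)].
  apply/seteqP; split => w /=; rewrite !degree_edge_matrix; first by case=> -> ->; rewrite !eqxx.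
  by case/andP => /eqP -> /eqP ->.
by rewrite (probability_fin_preimage edge_matrix_fiber_measurable
  (fun v => (matrix_degree v i == x) && (matrix_degree v j == x))).
Qed.

Lemma probability_emp_degree_pmf (Q : pred (nat -> R)) :
  P [set w | Q (emp_degree_pmf K c w)] =
  (\sum_(v | Q (emp_pmf (matrix_degree v))) fin_law edge_matrix v)%:E.
Proof.
rewrite -(probability_fin_preimage edge_matrix_fiber_measurable
  (fun v => Q (emp_pmf (matrix_degree v)))).
by congr (P _); apply/seteqP; split => w /=; rewrite emp_degree_pmf_edge_matrix.
Qed.

End edge_matrix.

Section nat_random_variable.
Variable X : T -> nat.

Lemma nat_cdf_between (d : nat) (z : R) : d%:R - 1 < z -> z < d%:R ->
  nat_cdf P X z = fine (P [set w | (X w < d)%N]).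
Proof.
move=> z_gt z_lt; congr (fine (P _)); apply/seteqP; split => w /=.
  by move=> Xz; rewrite ltnNge; apply/negP; rewrite -(ler_nat R) => dX; lra.
by rewrite -(ler_nat R) -natr1 => Xd; lra.
Qed.

Lemma nat_cdf_continuous_half (d : nat) : {for d%:R - 2^-1, continuous (nat_cdf P X)}.
Proof.
apply: cvg_near_cst.
have mid : d%:R - 2^-1 \in `](d%:R - 1 : R), d%:R[ by rewrite in_itv /=; apply/andP; split; lra.
apply: filterS (near_in_itvoo mid) => z; rewrite in_itv /= => /andP[z_gt z_lt].
by rewrite !(@nat_cdf_between d) //; lra.
Qed.

Hypothesis X_fiber : forall d, measurable [set w | X w = d].

Let lt_preimage m : [set w | (X w < m)%N] = [set w | X w \in index_iota 0 m].
Proof. by apply/seteqP; split => w /=; rewrite mem_index_iota. Qed.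

Lemma measurable_nat_lt m : measurable [set w | (X w < m)%N].
Proof. by rewrite lt_preimage; exact: measurable_mem_seq. Qed.

Lemma probability_nat_lt m :
  P [set w | (X w < m)%N] = (\sum_(0 <= x < m) nat_pmf P X x)%:E.
Proof. by rewrite lt_preimage probability_mem_seq // iota_uniq. Qed.

Lemma nat_pmf_sub_pmf : sub_pmf (nat_pmf P X).
Proof.
split=> [x|m]; first exact/fine_ge0/measure_ge0.
by rewrite -lee_fin -probability_nat_lt probability_le1 //; exact: measurable_nat_lt.
Qed.

Lemma nat_pmf_partial_sum_cvg1 :
  (fun m => \sum_(0 <= x < m) nat_pmf P X x) @ \oo --> (1 : R).
Proof.
have lt_cover : \bigcup_m [set w | (X w < m)%N] = setT.
  by apply/seteqP; split => w // _; exists (X w).+1 => //=.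
have lt_nondecr : nondecreasing_seq (fun m => [set w | (X w < m)%N]).
  by move=> a b ab; apply/subsetPset => w /= Xa; exact: leq_trans Xa ab.
have := @nondecreasing_cvg_mu _ _ R P _ measurable_nat_lt _ lt_nondecr.
rewrite lt_cover => /(_ measurableT) P_lt_cvg.
have : (P \o (fun m => [set w | (X w < m)%N])) @ \oo --> P setT := P_lt_cvg.
rewrite probability_setT => /fine_cvg.
suff -> : fine \o (P \o (fun m => [set w | (X w < m)%N])) =
  (fun m => \sum_(0 <= x < m) nat_pmf P X x) by [].
by apply/funext => m /=; rewrite probability_nat_lt.
Qed.

Lemma nat_pmf_cdf d :
  nat_pmf P X d = nat_cdf P X (d.+1%:R - 2^-1) - nat_cdf P X (d%:R - 2^-1).
Proof.
rewrite (@nat_cdf_between d.+1) ?(@nat_cdf_between d); try lra.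
by rewrite !probability_nat_lt /= big_nat_recr //= addrAC subrr add0r.
Qed.

End nat_random_variable.

Lemma nat_pmf_cvg (X : nat -> T -> nat) (Y : T -> nat) :
  (forall n d, measurable [set w | X n w = d]) ->
  (forall d, measurable [set w | Y w = d]) ->
  conv_in_distr P X Y -> forall d, (fun n => nat_pmf P (X n) d) @ \oo --> nat_pmf P Y d.
Proof.
move=> X_fiber Y_fiber XY d; rewrite nat_pmf_cdf //.
under eq_fun do rewrite nat_pmf_cdf //.
by apply: cvgB; apply: XY; exact: nat_cdf_continuous_half.
Qed.

Lemma covariance_indic (A B : set T) : measurable A -> measurable B ->
  covariance P (\1_A : T -> R) (\1_B) = (P (A `&` B) - P A * P B)%E.
Proof.
move=> mA mB; have indic_Lfun (C : set T) : measurable C -> (\1_C : T -> R) \in Lfun P 1.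
  by move=> mC; apply/Lfun1_integrable; exact: integrable_indic.
have indic_mul : ((\1_A : T -> R) * \1_B)%R = \1_(A `&` B) by rewrite indicI.
have mAB := measurableI _ _ mA mB.
by rewrite covarianceE ?indic_mul ?indic_Lfun // !expectation_indic.
Qed.

End discrete_random_variables.

Lemma unbounded_natr_inv_cvg0 {R : realType} (k : nat -> nat) :
  (forall M, exists N, forall n, (N <= n)%N -> (M <= k n)%N) ->
  (fun n => (k n)%:R^-1 : R) @ \oo --> 0.
Proof.
move=> k_unbounded; apply/cvgrPdist_lt => e e_gt0.
have [N kN] := k_unbounded (Num.Def.truncn e^-1).+1.
exists N => // n /= Nn.
have e_lt_k : e^-1 < (k n)%:R.
  by apply: lt_le_trans (truncnS_gt _) _; rewrite ler_nat kN.
have k_gt0 : (0 : R) < (k n)%:R by apply: le_lt_trans e_lt_k; rewrite invr_ge0 ltW.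
by rewrite sub0r normrN ger0_norm ?invr_ge0 ?ltW // -[e]invrK ltf_pV2 ?posrE ?invr_gt0.
Qed.

Section degree_sequence.
Context {dT : measure_display} {T : measurableType dT} {R : realType}.
Variables (P : probability T R) (k : nat -> nat) (chi : nat -> nat -> nat -> T -> bool).
Hypothesis k_gt1 : forall n, (1 < k n)%N.
Hypothesis chi_meas : forall n i l, measurable [set w | chi n i l w].
Hypothesis k_unbounded : forall M, exists N, forall n, (N <= n)%N -> (M <= k n)%N.
Hypothesis degree_same_distr : forall n i, (i < k n)%N ->
  same_distr P (degree (k n) (chi n) i) (degree (k n) (chi n) 0).
Hypothesis degree_same_joint_distr : forall n i j, (i < k n)%N -> (j < k n)%N -> i <> j ->
  same_joint_distr P (degree (k n) (chi n) i) (degree (k n) (chi n) j)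
                     (degree (k n) (chi n) 0) (degree (k n) (chi n) 1).

Let deg n := degree (k n) (chi n).
Let law n := fin_law P (edge_matrix (k n) (chi n)).
(* Otherwise [n] would be implicit, being determined by the type of the matrix argument. *)
Arguments law : clear implicits.
Let q n x := nat_pmf P (deg n 0) x.
Let pair_event n x := (fun w => (deg n 0 w, deg n 1 w)) @^-1` [set (x, x)].
Let r n x := fine (P (pair_event n x)).
Let k_gt0 n : (0 < k n)%N. Proof. exact: ltnW. Qed.
Let node0 n : 'I_(k n) := Ordinal (k_gt0 n).
Let node1 n : 'I_(k n) := Ordinal (k_gt1 n).

Lemma law_matrix_degree n (i : 'I_(k n)) x :
  \sum_(v | matrix_degree v i == x) law n v = q n x.
Proof. by rewrite -probability_degree_fiber // (degree_same_distr (ltn_ord i)). Qed.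

Lemma law_matrix_degree_pair n (i j : 'I_(k n)) x : i != j ->
  \sum_(v | (matrix_degree v i == x) && (matrix_degree v j == x)) law n v = r n x.
Proof.
move=> ij; rewrite -probability_degree_pair_fiber // degree_same_joint_distr //.
by move/val_inj => eq_ij; rewrite eq_ij eqxx in ij.
Qed.

Lemma covariance_degree_indic n x :
  covariance P (\1_[set w | deg n 0 w = x] : T -> R) (\1_[set w | deg n 1 w = x]) =
  (r n x - q n x ^+ 2)%:E.
Proof.
have fiber0 := degree_fiber_measurable (chi_meas n) (node0 n) x.
have fiber1 := degree_fiber_measurable (chi_meas n) (node1 n) x.
have pair_eq : [set w | deg n 0 w = x] `&` [set w | deg n 1 w = x] = pair_event n x.
  by rewrite /pair_event; apply/seteqP; split => w /=; case=> -> ->.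
have pair_meas : measurable (pair_event n x) by rewrite -pair_eq; exact: measurableI.
rewrite covariance_indic // pair_eq.
rewrite [P [set w | deg n 1 w = x]](degree_same_distr (k_gt1 n) [set x]).
by rewrite /r /q /nat_pmf EFinB expr2 EFinM !fineK ?fin_num_measure.
Qed.

Lemma emp_pmf_far_le n x px d : 0 < d -> `|px - q n x| < d / 2 ->
  \sum_(v | d <= `|emp_pmf (matrix_degree v) x - px|) law n v <=
  (d / 2)^-2 * ((k n)%:R^-1 + (r n x - q n x ^+ 2)).
Proof.
move=> d_gt0 q_near; have d2_gt0 : 0 < d / 2 by lra.
have law_ge0 := fin_law_ge0 P (edge_matrix (k n) (chi n)).
have law_sum1 := fin_law_sum1 P (edge_matrix_fiber_measurable (K := k n) (chi_meas n)).
apply: le_trans (frac_count_far_le law_ge0 (A := fun i v => matrix_degree v i == x) law_sum1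
  (fun i => law_matrix_degree i x) (fun i j => @law_matrix_degree_pair n i j x) (k_gt1 n) d2_gt0).
apply: ler_sum_subpred => // v far.
have := ler_normD (emp_pmf (matrix_degree v) x - q n x) (q n x - px).
by rewrite addrA subrK distrC in q_near *; lra.
Qed.

Variable p : nat -> R.
Hypothesis p_sub_pmf : sub_pmf p.
Hypothesis p_mass_cvg1 : (fun M => \sum_(0 <= x < M) p x) @ \oo --> (1 : R).
Hypothesis degree_pmf_cvg : forall x, (fun n => q n x) @ \oo --> p x.
Hypothesis degree_cov_cvg0 : forall x,
  (fun n => covariance P (\1_[set w | deg n 0 w = x] : T -> R)
                         (\1_[set w | deg n 1 w = x])) @ \oo --> 0%E.

Lemma emp_pmf_far_cvg0 x d : 0 < d ->
  (fun n => \sum_(v | d <= `|emp_pmf (matrix_degree v) x - p x|) law n v) @ \oo --> 0.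
Proof.
move=> d_gt0; have d2_gt0 : 0 < d / 2 by lra.
have var_cvg : (fun n => r n x - q n x ^+ 2) @ \oo --> 0.
  move: (@degree_cov_cvg0 x); under eq_fun do rewrite covariance_degree_indic.
  exact: fine_cvg.
have bound_cvg : (fun n => (d / 2)^-2 * ((k n)%:R^-1 + (r n x - q n x ^+ 2))) @ \oo --> 0.
  have := cvgM (cvg_cst ((d / 2)^-2)) (cvgD (unbounded_natr_inv_cvg0 k_unbounded) var_cvg).
  by rewrite addr0 mulr0; apply.
apply: (squeeze_cvgr _ (cvg_cst 0) bound_cvg).
apply: filterS (@cvgr_dist_lt _ _ _ _ _ _ _ (@degree_pmf_cvg x) _ d2_gt0) => n q_near.
by rewrite emp_pmf_far_le // andbT sumr_ge0 // => v _; exact: fin_law_ge0.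
Qed.

Lemma law_dTV_gt_le n (eps : R) (M : nat) :
  0 < eps -> 1 - \sum_(0 <= x < M) p x < eps / 2 ->
  \sum_(v | (eps%:E < dTV (emp_pmf (matrix_degree v)) p)%E) law n v <=
  \sum_(x < M) \sum_(v | eps / (2 * M.+1%:R) <= `|emp_pmf (matrix_degree v) x - p x|) law n v.
Proof.
move=> eps_gt0 tail_lt.
apply: le_trans (sum_exists_le_sum (fin_law_ge0 _ _) _).
apply: ler_sum_subpred => [v|v bad]; first exact: fin_law_ge0.
have [x xM far] := dTV_gt_exists_far (emp_pmf_sub_pmf (matrix_degree v) (k_gt0 n))
  p_sub_pmf eps_gt0 tail_lt bad.
by apply/existsP; exists (Ordinal xM).
Qed.

Lemma law_dTV_gt_cvg0 (eps : R) : 0 < eps ->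
  (fun n => \sum_(v | (eps%:E < dTV (emp_pmf (matrix_degree v)) p)%E) law n v) @ \oo --> 0.
Proof.
move=> eps_gt0; have eps2_gt0 : 0 < eps / 2 by lra.
have [M _ tail_near] := @cvgr_dist_lt _ _ _ _ _ _ _ p_mass_cvg1 _ eps2_gt0.
have tail_lt : 1 - \sum_(0 <= x < M) p x < eps / 2.
  exact: le_lt_trans (ler_norm _) (tail_near M (leqnn M)).
have d_gt0 : 0 < eps / (2 * M.+1%:R) by rewrite divr_gt0 // mulr_gt0 ?ltr0n.
have far_cvg : (fun n => \sum_(x < M)
    \sum_(v | eps / (2 * M.+1%:R) <= `|emp_pmf (matrix_degree v) x - p x|) law n v)
    @ \oo --> \sum_(x < M) (0 : R).
  by apply: (cvg_big add_continuous) => // x _; exact: emp_pmf_far_cvg0.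
rewrite big1 // in far_cvg.
apply: squeeze_cvgr (cvg_cst 0) far_cvg; apply: nearW => n.
by rewrite law_dTV_gt_le // andbT sumr_ge0 // => v _; exact: fin_law_ge0.
Qed.

End degree_sequence.

Theorem proposition5 (dT : measure_display) (T : measurableType dT) (R : realType)
    (P : probability T R)
    (k : nat -> nat) (chi : nat -> nat -> nat -> T -> bool) (D : T -> nat) :
  (forall n, (2 <= k n)%N) ->
  (forall n i l, measurable [set w | chi n i l w]) ->
  measurable_fun setT D ->
  (forall M : nat, exists N : nat, forall n, (N <= n)%N -> (M <= k n)%N) ->
  (* (A) *)
  (forall n i, (i < k n)%N ->
     same_distr P (degree (k n) (chi n) i) (degree (k n) (chi n) 0)) ->
  (forall n i j, (i < k n)%N -> (j < k n)%N -> i <> j ->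
     same_joint_distr P (degree (k n) (chi n) i) (degree (k n) (chi n) j)
                        (degree (k n) (chi n) 0) (degree (k n) (chi n) 1)) ->
  (* (B) *)
  conv_in_distr P (fun n => degree (k n) (chi n) 0) D ->
  (* (C) *)
  (forall d : nat,
     (fun n => covariance P
        (\1_[set w | degree (k n) (chi n) 0 w = d] : T -> R)
        (\1_[set w | degree (k n) (chi n) 1 w = d] : T -> R)) @ \oo --> 0%E) ->
  (* conclusion: d_TV(P_n, p) -> 0 in probability *)
  forall eps : R, 0 < eps ->
    (fun n => P [set w | (eps%:E < dTV (emp_degree_pmf (k n) (chi n) w) (nat_pmf P D))%E])
      @ \oo --> 0%E.
Proof.
move=> k_gt1 chi_meas D_meas k_unbounded same1 same2 D_lim cov_lim eps eps_gt0.
set p := nat_pmf P D.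
have D_fiber d : measurable [set w | D w = d].
  by have := D_meas measurableT [set d]; rewrite setTI; apply.
have degree0_fiber n d : measurable [set w | degree (k n) (chi n) 0 w = d].
  exact: (degree_fiber_measurable (chi_meas n) (Ordinal (ltnW (k_gt1 n)))).
under eq_fun do rewrite (probability_emp_degree_pmf P _ (chi_meas _)
  (fun a => eps%:E < dTV a p)%E).
apply: cvg_EFin; first exact: nearW.
apply: law_dTV_gt_cvg0 => //; first exact: nat_pmf_sub_pmf.
- exact: nat_pmf_partial_sum_cvg1.
- by move=> x; apply: nat_pmf_cvg.
Qed.
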